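(* Let $r,s$ be positive integers, let $P$ be a lattice path and let $Q=P+(r,s)$ be its translate by $(r,s)$. Suppose there are integers $i<k$ such that $P$ and $Q$ both meet the lines $x+y=i$ and $x+y=k$, and $$x_i(P)>x_i(Q)\quad\text{and}\quad x_k(P)\le x_k(Q).$$ Then $P$ is invalid.
   Context: A lattice path is a path in $\mathbb{Z}^2$ consisting of unit steps north ($N$-steps, adding $(0,1)$) and east ($E$-steps, adding $(1,0)$). For fixed positive integers $r,s$, points $v,w\in\mathbb{Z}^2$ are equivalent if $v-w=\ell(r,s)$ for some $\ell\in\mathbb{Z}$; $[v]$ denotes the class of $v$. A lattice path $P$ is valid if whenever $P$ enters a point $v$ with an $E$-step, every later point of $P$ in $[v]$ is also entered by an $E$-step; otherwise it is invalid. For a path $P$ and a point $v$, $P+v$ is the path obtained by adding $v$ to every point of $P$. For a lattice path $P$ and integer $i$, $v_i(P)=(x_i(P),y_i(P))$ denotes the (unique) point where $P$ meets the line $x+y=i$. *)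

From Stdlib Require Import ZArith List.
Open Scope Z_scope.

Definition point := (Z * Z)%type.

Definition padd (p q : point) : point := (fst p + fst q, snd p + snd q).

(* A (finite) lattice path: a starting point and a list of unit steps;
   [true] = E-step (1,0), [false] = N-step (0,1). *)
Record lpath := LPath { start : point; steps : list bool }.

Definition step_vec (b : bool) : point := if b then (1, 0) else (0, 1).

Fixpoint pts_from (p : point) (l : list bool) : list point :=
  p :: match l with
       | nil => nil
       | b :: l' => pts_from (padd p (step_vec b)) l'
       end.

Definition points (P : lpath) : list point := pts_from (start P) (steps P).
Definition len (P : lpath) : nat := length (steps P).
Definition pt (P : lpath) (j : nat) : point := nth j (points P) (start P).

Definition enteredE (P : lpath) (j : nat) : Prop :=
  (1 <= j <= len P)%nat /\ nth (j - 1) (steps P) false = true.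

Definition equiv (r s : Z) (v w : point) : Prop :=
  exists l : Z, fst v - fst w = l * r /\ snd v - snd w = l * s.

Definition valid (r s : Z) (P : lpath) : Prop :=
  forall j m : nat, enteredE P j -> (j < m <= len P)%nat ->
    equiv r s (pt P j) (pt P m) -> enteredE P m.

Definition invalid (r s : Z) (P : lpath) : Prop := ~ valid r s P.

Definition translate (P : lpath) (v : point) : lpath :=
  LPath (padd (start P) v) (steps P).

Definition start_level (P : lpath) : Z := fst (start P) + snd (start P).

(* P meets the line x + y = i (each step raises x+y by exactly 1). *)
Definition meets (P : lpath) (i : Z) : Prop :=
  start_level P <= i <= start_level P + Z.of_nat (len P).

Definition v_ (P : lpath) (i : Z) : point := pt P (Z.to_nat (i - start_level P)).
Definition x_ (P : lpath) (i : Z) : Z := fst (v_ P i).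

(* Let d = r + s and let g(t) = x(p_(t+d)) - x(p_t) be the x-gap between
   points of P lying d levels apart.  Since x_i(Q) = x_(i-d)(P) + r, the
   hypotheses say g > r at the level of i and g <= r at the level of k.
   Each step changes g by [p_(t+d) entered by E] - [p_t entered by E], so
   where g first drops from above r to r, p_(t+1) is entered by an E-step,
   p_(t+1+d) by an N-step, and p_(t+1+d) - p_(t+1) = (r, s). *)

From Stdlib Require Import ZArith List Lia.
Open Scope Z_scope.

Lemma pts_from_head (p : point) (l : list bool) (d : point) :
  nth 0 (pts_from p l) d = p.
Proof. now destruct l. Qed.

Lemma pts_from_succ (l : list bool) :
  forall (p d : point) (j : nat), (j < length l)%nat ->
  nth (S j) (pts_from p l) d
  = padd (nth j (pts_from p l) d) (step_vec (nth j l false)).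
Proof.
  induction l as [|b l IH]; intros p d j Hj; simpl in Hj; [lia|].
  destruct j as [|j].
  - apply pts_from_head.
  - apply (IH _ _ j); lia.
Qed.

Lemma padd_right_comm (p v w : point) : padd (padd p v) w = padd (padd p w) v.
Proof. destruct p, v, w; unfold padd; simpl; f_equal; ring. Qed.

Lemma pts_from_translate (v : point) (l : list bool) :
  forall p : point, pts_from (padd p v) l = map (fun q => padd q v) (pts_from p l).
Proof.
  induction l as [|b l IH]; intro p; [reflexivity|].
  simpl; rewrite padd_right_comm, IH; reflexivity.
Qed.

Lemma pt_succ (P : lpath) (j : nat) : (j < len P)%nat ->
  pt P (S j) = padd (pt P j) (step_vec (nth j (steps P) false)).
Proof. apply pts_from_succ. Qed.

Lemma pt_translate (P : lpath) (v : point) (j : nat) :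
  pt (translate P v) j = padd (pt P j) v.
Proof.
  unfold pt, points; simpl.
  rewrite pts_from_translate; apply (map_nth (fun q => padd q v)).
Qed.

Lemma pt_level (P : lpath) (j : nat) : (j <= len P)%nat ->
  fst (pt P j) + snd (pt P j) = start_level P + Z.of_nat j.
Proof.
  induction j as [|j IH]; intro Hj.
  - unfold pt, points; rewrite pts_from_head; unfold start_level; lia.
  - rewrite pt_succ by lia; specialize (IH ltac:(lia)).
    destruct (pt P j), (nth j (steps P) false); unfold padd in *; simpl in *; lia.
Qed.

Lemma fst_pt_succ (P : lpath) (j : nat) : (j < len P)%nat ->
  fst (pt P (S j)) = fst (pt P j) + if nth j (steps P) false then 1 else 0.
Proof.
  intro Hj; rewrite pt_succ by exact Hj.
  destruct (nth j (steps P) false); reflexivity.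
Qed.

Lemma enteredE_succ (P : lpath) (j : nat) : (j < len P)%nat ->
  enteredE P (S j) <-> nth j (steps P) false = true.
Proof.
  intro Hj; unfold enteredE; simpl; rewrite Nat.sub_0_r; intuition lia.
Qed.

Lemma x_translate (P : lpath) (v : point) (i : Z) :
  x_ (translate P v) i = x_ P (i - fst v - snd v) + fst v.
Proof.
  unfold x_, v_; rewrite pt_translate.
  replace (i - start_level (translate P v))
    with (i - fst v - snd v - start_level P)
    by (unfold start_level, translate, padd; simpl; ring).
  reflexivity.
Qed.

Lemma meets_translate (P : lpath) (v : point) (i : Z) :
  meets (translate P v) i <-> meets P (i - fst v - snd v).
Proof. unfold meets, start_level, len; simpl; lia. Qed.

Lemma Z_nat_crossing (f : nat -> Z) (c : Z) (a b : nat) :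
  (a < b)%nat -> f a > c -> f b <= c ->
  exists j, (a <= j < b)%nat /\ f j > c /\ f (S j) <= c.
Proof.
  induction b as [|b IH]; intros Hab Ha Hb; [lia|].
  destruct (Z_le_gt_dec (f b) c) as [Hfb|Hfb].
  - destruct (Nat.eq_dec a b) as [->|Hne]; [lia|].
    destruct (IH ltac:(lia) Ha Hfb) as [j Hj]; exists j; lia.
  - exists b; lia.
Qed.

Definition xgap (P : lpath) (d t : nat) : Z := fst (pt P (t + d)) - fst (pt P t).

Lemma x_sub_x_xgap (P : lpath) (d : nat) (i : Z) :
  start_level P + Z.of_nat d <= i ->
  x_ P i - x_ P (i - Z.of_nat d)
  = xgap P d (Z.to_nat (i - Z.of_nat d - start_level P)).
Proof.
  intro Hi; unfold x_, v_, xgap.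
  do 3 f_equal; lia.
Qed.

Lemma xgap_succ (P : lpath) (d t : nat) : (t + d < len P)%nat ->
  xgap P d (S t)
  = xgap P d t + (if nth (t + d) (steps P) false then 1 else 0)
               - (if nth t (steps P) false then 1 else 0).
Proof.
  intro Ht; unfold xgap; simpl.
  rewrite !fst_pt_succ by lia; ring.
Qed.

Lemma xgap_eq_equiv (r s : Z) (P : lpath) (d t : nat) :
  Z.of_nat d = r + s -> (t + d <= len P)%nat -> xgap P d t = r ->
  equiv r s (pt P t) (pt P (t + d)).
Proof.
  unfold xgap; intros Hd Ht Hgap; exists (-1).
  pose proof (pt_level P t ltac:(lia)).
  pose proof (pt_level P (t + d) Ht).
  split; lia.
Qed.

Lemma invalid_of_xgap_drop (r s : Z) (P : lpath) (d t : nat) :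
  Z.of_nat d = r + s -> (t + d < len P)%nat ->
  xgap P d t > r -> xgap P d (S t) <= r -> invalid r s P.
Proof.
  intros Hd Ht Hgt Hle Hval.
  pose proof (xgap_succ P d t Ht) as Hstep.
  destruct (nth t (steps P) false) eqn:Et, (nth (t + d) (steps P) false) eqn:Etd;
    try lia.
  assert (Hd0 : (0 < d)%nat)
    by (destruct d; [rewrite Nat.add_0_r in Etd; congruence | lia]).
  assert (Hent : enteredE P (S t)) by (apply enteredE_succ; [lia | exact Et]).
  assert (Heq : equiv r s (pt P (S t)) (pt P (S (t + d))))
    by (apply (xgap_eq_equiv r s P d (S t)); lia).
  assert (Hlater : enteredE P (S (t + d))) by (apply (Hval (S t)); auto; lia).
  apply enteredE_succ in Hlater; [congruence | lia].
Qed.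

Theorem mainTheorem2 (r s : Z) (hr : 0 < r) (hs : 0 < s) (P : lpath) (i k : Z) :
  i < k ->
  meets P i -> meets (translate P (r, s)) i ->
  meets P k -> meets (translate P (r, s)) k ->
  x_ P i > x_ (translate P (r, s)) i ->
  x_ P k <= x_ (translate P (r, s)) k ->
  invalid r s P.
Proof.
  intros Hik _ HQi HPk _ Hi Hk.
  rewrite meets_translate in HQi; unfold meets in HQi, HPk; simpl in HQi.
  rewrite x_translate in Hi, Hk; simpl in Hi, Hk.
  set (d := Z.to_nat (r + s)).
  assert (Hd : Z.of_nat d = r + s) by lia.
  set (a := Z.to_nat (i - Z.of_nat d - start_level P)).
  set (b := Z.to_nat (k - Z.of_nat d - start_level P)).
  assert (Ha : xgap P d a > r).
  { unfold a; rewrite <- x_sub_x_xgap by lia.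
    replace (i - Z.of_nat d) with (i - r - s) by lia; lia. }
  assert (Hb : xgap P d b <= r).
  { unfold b; rewrite <- x_sub_x_xgap by lia.
    replace (k - Z.of_nat d) with (k - r - s) by lia; lia. }
  destruct (Z_nat_crossing (xgap P d) r a b ltac:(lia) Ha Hb) as [t [Ht [Hgt Hle]]].
  apply (invalid_of_xgap_drop r s P d t Hd); [lia | exact Hgt | exact Hle].
Qed.
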